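(* Let $H$ be a heap, $a,a'$ addresses, $g$ a closure, and $s,s',t'$ terms. If $H[a']=(g,a)$, $g\gg_H t'$ and $\langle s,a\rangle\triangleright^H_1 s'$, then $\langle s,a'\rangle\triangleright^H_0 s'^0_{t'}$.
   Context: Terms (de Bruijn): $s::=n\mid st\mid\lambda s$. Substitution $k^k_u=u$, $n^k_u=n$ ($n\ne k$), $(st)^k_u=(s^k_u)(t^k_u)$, $(\lambda s)^k_u=\lambda(s^{k+1}_u)$. Programs are lists of commands $\mathsf{ret},\mathsf{var}\,n,\mathsf{lam},\mathsf{app}$; $\gamma n=[\mathsf{var}\,n]$, $\gamma(st)=\gamma s++\gamma t++[\mathsf{app}]$, $\gamma(\lambda s)=\mathsf{lam}::\gamma s++[\mathsf{ret}]$. $P\gg s$ iff $P=\gamma u$ and $s=\lambda u$. A closure is a pair $(P,a)$ of a program and an address $a\in\mathbb N$; a heap entry is a pair $(g,b)$ of a closure and an address; a heap $H$ is a list of entries; $H[a]$ is the $a$-th entry for $1\le a\le|H|$, undefined otherwise. Lookup: if $H[a]=(g,b)$ then $H[a,0]=g$ and $H[a,n+1]=H[b,n]$; else undefined. Unfolding $\langle s,a\rangle\triangleright^H_k s'$ is inductively defined: $\langle n,a\rangle\triangleright^H_k n$ if $n<k$; $\langle n,a\rangle\triangleright^H_k s'$ if $n\ge k$, $H[a,n-k]=(P,b)$, $P\gg u$, $\langle u,b\rangle\triangleright^H_0 s'$; $\langle\lambda s,a\rangle\triangleright^H_k\lambda s'$ if $\langle s,a\rangle\triangleright^H_{k+1}s'$;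 $\langle st,a\rangle\triangleright^H_k s't'$ if $\langle s,a\rangle\triangleright^H_k s'$ and $\langle t,a\rangle\triangleright^H_k t'$. $(P,a)\gg_H s$ iff $P\gg u$ and $\langle u,a\rangle\triangleright^H_0 s$ for some $u$. *)

From Stdlib Require Import List Arith.
Import ListNotations.

Inductive term : Type :=
| var (n : nat)
| app (s t : term)
| lam (s : term).

Fixpoint subst (s : term) (k : nat) (u : term) : term :=
  match s with
  | var n => if Nat.eqb n k then u else var n
  | app s1 s2 => app (subst s1 k u) (subst s2 k u)
  | lam s1 => lam (subst s1 (S k) u)
  end.

Inductive com : Type := retC | varC (n : nat) | lamC | appC.
Definition prog := list com.

Fixpoint gamma (s : term) : prog :=
  match s with
  | var n => [varC n]
  | app s t => gamma s ++ gamma t ++ [appC]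
  | lam s => lamC :: gamma s ++ [retC]
  end.

Definition prog_repr (P : prog) (s : term) : Prop :=
  exists u, P = gamma u /\ s = lam u.

Definition closure := (prog * nat)%type.
Definition heapEntry := (closure * nat)%type.
Definition heap := list heapEntry.

(* H[a]: the a-th entry, 1-indexed; undefined (None) unless 1 <= a <= |H| *)
Definition heap_get (H : heap) (a : nat) : option heapEntry :=
  match a with
  | 0 => None
  | S a' => nth_error H a'
  end.

Fixpoint lookup (H : heap) (a n : nat) : option closure :=
  match heap_get H a with
  | Some (g, b) =>
      match n with
      | 0 => Some g
      | S n' => lookup H b n'
      end
  | None => None
  end.

Inductive unfolds (H : heap) : term -> nat -> nat -> term -> Prop :=
| unf_var_bound : forall n a k, n < k -> unfolds H (var n) a k (var n)
| unf_var_heap : forall n a k P b u s', k <= n ->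
    lookup H a (n - k) = Some (P, b) ->
    prog_repr P u ->
    unfolds H u b 0 s' ->
    unfolds H (var n) a k s'
| unf_lam : forall s a k s', unfolds H s a (S k) s' ->
    unfolds H (lam s) a k (lam s')
| unf_app : forall s t a k s' t', unfolds H s a k s' -> unfolds H t a k t' ->
    unfolds H (app s t) a k (app s' t').

Definition closure_repr (H : heap) (g : closure) (s : term) : Prop :=
  exists u, prog_repr (fst g) u /\ unfolds H u (snd g) 0 s.

(** Environment [a'] is environment [a] extended by the closure [g] in front.
    Hence, under [k] binders, a variable [n > k] looks up the same closure
    through [a'] as [n - 1] does through [a], while [n = k], which the
    unfolding at [a] with [k + 1] bound variables left as [var k], now
    unfolds to [t']: this is exactly the substitution of [t'] for [k].
    The substitution leaves the unfolded closures untouched because an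
    unfolding at depth [j] has no free variable [>= j]. *)

From Stdlib Require Import Arith Lia.

Lemma lookup_extend_0 (H : heap) (a a' : nat) (g : closure) :
  heap_get H a' = Some (g, a) -> lookup H a' 0 = Some g.
Proof. intros Hg. simpl. now rewrite Hg. Qed.

Lemma lookup_extend_S (H : heap) (a a' n : nat) (g : closure) :
  heap_get H a' = Some (g, a) -> lookup H a' (S n) = lookup H a n.
Proof. intros Hg. simpl. now rewrite Hg. Qed.

Lemma unfolds_subst_id (H : heap) (s s' u : term) (a k j : nat) :
  unfolds H s a k s' -> k <= j -> subst s' j u = s'.
Proof.
  intros Hs. revert j. induction Hs; intros j Hkj; simpl.
  - destruct (Nat.eqb_spec n j); [lia | reflexivity].
  - apply IHHs. lia.
  - rewrite IHHs; [reflexivity | lia].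
  - now rewrite IHHs1, IHHs2.
Qed.

Lemma closure_repr_unfolds_var (H : heap) (a' k : nat) (g : closure) (t' : term) :
  lookup H a' 0 = Some g -> closure_repr H g t' -> unfolds H (var k) a' k t'.
Proof.
  destruct g as [P b]. intros Hg [u [HP Hu]].
  apply unf_var_heap with (P := P) (b := b) (u := u); auto.
  now rewrite Nat.sub_diag.
Qed.

Lemma unfolds_extend_subst (H : heap) (a a' : nat) (g : closure)
    (s s' t' : term) (k : nat) :
  heap_get H a' = Some (g, a) ->
  closure_repr H g t' ->
  unfolds H s a (S k) s' ->
  unfolds H s a' k (subst s' k t').
Proof.
  intros Hg Hc Hs. remember (S k) as k1 eqn:Ek. revert k Ek Hg.
  induction Hs as [n b k1 Hn | n b k1 P c u s' Hk1 Hl HP Hu _ | s b k1 s' _ IH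
                  | s1 s2 b k1 s1' s2' _ IH1 _ IH2];
    intros k Ek Hg; subst k1; simpl.
  - destruct (Nat.eqb_spec n k) as [-> | Hnk].
    + exact (closure_repr_unfolds_var _ _ _ _ _ (lookup_extend_0 _ _ _ _ Hg) Hc).
    + apply unf_var_bound. lia.
  - rewrite (unfolds_subst_id _ _ _ _ _ _ _ Hu (Nat.le_0_l k)).
    apply unf_var_heap with (P := P) (b := c) (u := u); auto; [lia |].
    replace (n - k) with (S (n - S k)) by lia.
    now rewrite (lookup_extend_S _ _ _ _ _ Hg).
  - apply unf_lam. now apply IH.
  - apply unf_app; auto.
Qed.

Theorem mainTheorem15 (H : heap) (a a' : nat) (g : closure) (s s' t' : term) :
  heap_get H a' = Some (g, a) ->
  closure_repr H g t' ->
  unfolds H s a 1 s' ->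
  unfolds H s a' 0 (subst s' 0 t').
Proof. apply unfolds_extend_subst. Qed.
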